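(* Let $\mathcal{S}$ be a finite skew translation generalized quadrangle of order $s$ with $s$ even, with elation group $G$ (of order $s^3$) and associated $4$-gonal family $(G,\{A_i\}_{i=0}^s,\{A_i^*\}_{i=0}^s)$, and let $U_0:=\bigcap_{i=0}^s A_i^*$. For $g\in G$ define \[\chi_S(g)=\frac{1}{2s^2}\sum_{i=0}^s\Big(|C_G(g)|(s|A_i\cap g^G|+|A_i^*\cap g^G|)-|G/G'|(s|A_i\cap gG'|+|A_i^*\cap gG'|)\Big),\] \[\chi_T(g)=\frac{1}{2s^2}\sum_{i=0}^s\Big(|C_G(g)|(s|A_i\cap g^G|-|A_i^*\cap g^G|)-|G/G'|(s|A_i\cap gG'|-|A_i^*\cap gG'|)\Big).\] Then $\chi_S$ and $\chi_T$ coincide on $U_0$, and for $g\in U_0$, \[\chi_S(g)=\begin{cases}0,& g\in U_0\setminus G',\\ -\frac{s+1}{2s}|G/G'|,& g\in G'\setminus\{1\},\\ \frac{s+1}{2s}(s^3-|G/G'|),& g=1.\end{cases}\]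
   Context: A generalized quadrangle of order $s$: each line has $s+1$ points, each point is on $s+1$ lines, and for each non-incident point-line pair $(P,\ell)$ there is a unique point on $\ell$ collinear with $P$. An elation about $P$ is an automorphism that is the identity or fixes each line through $P$ and no point not collinear with $P$; a symmetry about $P$ is an elation about $P$ fixing every point collinear with $P$. $\mathcal{S}$ is an elation generalized quadrangle with base point $P$ and elation group $G$ if $G$ consists of elations about $P$ and acts regularly on the points not collinear with $P$; it is a skew translation generalized quadrangle if $G$ contains a subgroup of $s$ symmetries about $P$. The associated $4$-gonal family: fix a point $y$ not collinear with $P$, let $M_0,\dots,M_s$ be the lines through $y$, let $z_i$ be the unique point of $M_i$ collinear with $P$, and let $A_i$, $A_i^*$ be the stabilizers in $G$ of $M_i$ and $z_i$ respectively. $g^G$ is the conjugacy class, $C_G(g)$ the centralizer, $G'$ the derived subgroup. (The formulas for $\chi_S,\chi_T$ are the general ones with $t=s$.) *)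

From mathcomp Require Import all_boot all_order all_algebra all_fingroup all_solvable.
Set Implicit Arguments. Unset Strict Implicit. Unset Printing Implicit Defensive.
Import GRing.Theory Num.Theory.

(* A finite incidence geometry: points form a finType Pt, lines are
   (given as) sets of points, collected in L : {set {set Pt}};
   incidence is membership. *)

Definition collinear (Pt : finType) (L : {set {set Pt}}) (x y : Pt) : bool :=
  [exists l in L, (x \in l) && (y \in l)].

Definition is_GQ (Pt : finType) (L : {set {set Pt}}) (s : nat) : Prop :=
  [/\ (forall l, l \in L -> #|l| = s.+1),
      (forall x : Pt, #|[set l in L | x \in l]| = s.+1),
      (forall x y : Pt, x != y -> #|[set l in L | (x \in l) && (y \in l)]| <= 1)
    & (forall (x : Pt) l, l \in L -> x \notin l ->
         exists! z, z \in l /\ collinear L x z)].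

(* Automorphisms are modelled as permutations of the points mapping lines to
   lines (a permutation of a finite set preserving L induces a bijection of L). *)
Definition is_coll (Pt : finType) (L : {set {set Pt}}) (g : {perm Pt}) : Prop :=
  forall l, l \in L -> g @: l \in L.

Definition is_elation (Pt : finType) (L : {set {set Pt}}) (P : Pt) (g : {perm Pt}) : Prop :=
  g = 1%g \/
  ((forall l, l \in L -> P \in l -> g @: l = l) /\
   (forall x, ~~ collinear L P x -> g x != x)).

Definition is_symmetry (Pt : finType) (L : {set {set Pt}}) (P : Pt) (g : {perm Pt}) : Prop :=
  is_elation L P g /\ (forall x, collinear L P x -> g x = x).

Definition is_EGQ (Pt : finType) (L : {set {set Pt}}) (s : nat) (P : Pt)
    (G : {group {perm Pt}}) : Prop :=
  [/\ is_GQ L s,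
      (forall g, g \in G -> is_coll L g /\ is_elation L P g)
    & (forall x y, ~~ collinear L P x -> ~~ collinear L P y ->
         exists! g, g \in G /\ g x = y)].

Definition is_STGQ (Pt : finType) (L : {set {set Pt}}) (s : nat) (P : Pt)
    (G : {group {perm Pt}}) : Prop :=
  is_EGQ L s P G /\
  exists H : {group {perm Pt}},
    [/\ H \subset G, #|H| = s & forall h, h \in H -> is_symmetry L P h].

(* The 4-gonal family w.r.t. a point y not collinear with P:
   the lines M through y, z_M the point of M collinear with P,
   A_M = stabilizer of M in G, A*_M = stabilizer of z_M in G. *)
Definition lines_through (Pt : finType) (L : {set {set Pt}}) (y : Pt) :=
  [set M in L | y \in M].

Definition zpt (Pt : finType) (L : {set {set Pt}}) (P : Pt) (M : {set Pt}) : Pt :=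
  odflt P [pick z in M | collinear L P z].

Definition Astab (Pt : finType) (G : {group {perm Pt}}) (M : {set Pt}) :=
  [set g in G | g @: M == M].

Definition Astarstab (Pt : finType) (L : {set {set Pt}}) (P : Pt)
    (G : {group {perm Pt}}) (M : {set Pt}) :=
  [set g in G | g (zpt L P M) == zpt L P M].

Definition U0 (Pt : finType) (L : {set {set Pt}}) (P y : Pt) (G : {group {perm Pt}}) :=
  \bigcap_(M in lines_through L y) Astarstab L P G M.

Local Open Scope ring_scope.

Definition chi_gen (b : bool) (Pt : finType) (L : {set {set Pt}}) (s : nat) (P y : Pt)
    (G : {group {perm Pt}}) (g : {perm Pt}) : rat :=
  let e : rat := if b then 1 else -1 in
  (2 * (s ^ 2)%N%:R)^-1 *
  \sum_(M in lines_through L y)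
    ( #|'C_G[g]%g|%:R * (s%:R * #|Astab G M :&: (g ^: G)%g|%:R
                       + e * #|Astarstab L P G M :&: (g ^: G)%g|%:R)
    - #|(G / G^`(1))%g|%:R * (s%:R * #|Astab G M :&: (g *: G^`(1))%g|%:R
                       + e * #|Astarstab L P G M :&: (g *: G^`(1))%g|%:R)).

Definition chi_S := chi_gen true.
Definition chi_T := chi_gen false.

From mathcomp Require Import all_boot all_order all_algebra all_fingroup all_solvable.
From mathcomp Require Import zify ring.
Set Implicit Arguments. Unset Strict Implicit. Unset Printing Implicit Defensive.
Import GRing.Theory Num.Theory.

(* Let H be the group of the s symmetries about P.  Two distinct A*_M, A*_N meet
   exactly in H, since |A*_M :&: A*_N| <= s and H fixes every point collinear
   with P.  As |A_M| >= s and A_M :&: H = 1 we get |A*_M| >= s^2, so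
   G = A*_M A*_N has order s^3, and counting shows that the A*_M cover G.  Hence
   each A*_M is normal, commutators of elements of distinct A*_M lie in H and,
   as s even gives at least three lines through y, G' <= H.  So every g in U0
   lies in the normal subgroup H: its class and its G'-coset lie in every A*_M
   and meet every A_M at most in 1, and the class equation
   |C_G(g)| |g^G| = |G| = |G/G'| |G'| cancels the A*-terms of chi_S and chi_T. *)

Lemma card_bigcup_leq (I T : finType) (D : {pred I}) (F : I -> {set T}) :
  #|\bigcup_(i in D) F i| <= \sum_(i in D) #|F i|.
Proof.
elim/big_ind2: _ => [|m U n V leUm leVn|//]; first by rewrite cards0.
by rewrite (leq_trans (leq_card_setU U V)) ?leq_add.
Qed.

Lemma leq_sum_card_disjoint (I T : finType) (D : {pred I}) (F : I -> {set T})
    (B : {set T}) :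
  {in D, forall i, F i \subset B} ->
  {in D &, forall i j, i != j -> [disjoint F i & F j]} ->
  \sum_(i in D) #|F i| <= #|B|.
Proof.
move=> sFB disjF; rewrite -sum1_card.
under eq_bigr => i _ do rewrite -sum1_card.
rewrite (exchange_big_dep (mem B)) => [|i x Di]; last exact: subsetP (sFB i Di) x.
apply: leq_sum => x _; rewrite sum1dep_card.
apply/card_le1_eqP => i j; rewrite !inE => /andP[Di xFi] /andP[Dj xFj].
have [//|ji] := eqVneq j i.
by rewrite (disjointFr (disjF i j Di Dj _) xFi) // eq_sym in xFj.
Qed.

Lemma mem1_class (gT : finGroupType) (G : {group gT}) (g : gT) :
  (1 \in g ^: G)%g = (g == 1%g).
Proof.
apply/class_eqP/eqP => [|->]; rewrite ?class1G //.
by move/esym/eqP; rewrite classG_eq1 => /eqP.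
Qed.

Lemma card_setI_trivial (gT : finGroupType) (A B : {group gT}) (S : {set gT}) :
  (A :&: B = 1)%g -> S \subset B -> #|A :&: S| = (1%g \in S).
Proof.
move=> trivAB sSB; have sub1 : A :&: S \subset [1]%g by rewrite -trivAB setIS.
have [S1 | nS1] := boolP (1%g \in S).
  rewrite (_ : A :&: S = [1]%g) ?cards1 //.
  by apply/eqP; rewrite eqEsubset sub1 sub1set in_setI group1.
apply/eqP; rewrite cards_eq0 -subset0; apply/subsetP => x xAS.
have /set1P x1 := subsetP sub1 x xAS.
by move: xAS; rewrite x1 in_setI (negbTE nS1) andbF.
Qed.

Section Quadrangle.

Variables (Pt : finType) (L : {set {set Pt}}) (s : nat).
Hypothesis GQ : is_GQ L s.

Lemma in_lines_through x l : (l \in lines_through L x) = (l \in L) && (x \in l).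
Proof. by rewrite inE. Qed.

Lemma collinearP x z :
  reflect (exists l, [/\ l \in L, x \in l & z \in l]) (collinear L x z).
Proof.
apply: (iffP exists_inP) => [[l lL /andP[xl zl]]|[l [lL xl zl]]]; first by exists l.
by exists l; rewrite ?xl.
Qed.

Lemma collinear_sym x z : collinear L x z = collinear L z x.
Proof. by apply/collinearP/collinearP => -[l [? ? ?]]; exists l. Qed.

Lemma collinear_mem l x z : l \in L -> x \in l -> z \in l -> collinear L x z.
Proof. by move=> lL xl zl; apply/collinearP; exists l. Qed.

Lemma line_unique l1 l2 x z : l1 \in L -> l2 \in L -> x != z ->
  x \in l1 -> z \in l1 -> x \in l2 -> z \in l2 -> l1 = l2.
Proof.
case: GQ => _ _ le1 _ l1L l2L xz xl1 zl1 xl2 zl2.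
apply: contraTeq (le1 x z xz) => l12; rewrite -ltnNge.
apply/card_gt1P; exists l1, l2; split=> //; rewrite inE ?l1L ?l2L ?xl1 ?xl2 //.
Qed.

Lemma proj_unique l x z1 z2 : l \in L -> x \notin l -> z1 \in l -> z2 \in l ->
  collinear L x z1 -> collinear L x z2 -> z1 = z2.
Proof.
case: GQ => _ _ _ proj lL xl z1l z2l xz1 xz2.
by have [z [_ uniq_z]] := proj x l lL xl; rewrite -(uniq_z z1) ?(uniq_z z2).
Qed.

Lemma card_line_setD1 l x : l \in L -> x \in l -> #|l :\ x| = s.
Proof.
case: GQ => card_l _ _ _ lL xl.
by apply/eqP; rewrite -eqSS -(card_l l lL) (cardsD1 x l) xl.
Qed.

Lemma card_lines_through x : #|lines_through L x| = s.+1.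
Proof. by case: GQ => _ card_pencil _ _; apply: card_pencil. Qed.

Lemma card_lines_through_setD1 x l : l \in L -> x \in l ->
  #|lines_through L x :\ l| = s.
Proof.
move=> lL xl; apply/eqP; rewrite -eqSS -(card_lines_through x).
by rewrite (cardsD1 l (lines_through L x)) in_lines_through lL xl.
Qed.

(* A point x not collinear with P is reached from the unique point w of a fixed
   line l0 through P collinear with x, then along the line m joining w and x. *)
Lemma card_noncollinear_leq P : #|[set x | ~~ collinear L P x]| <= s ^ 3.
Proof.
have /card_gt0P[l0] : 0 < #|lines_through L P| by rewrite card_lines_through.
rewrite in_lines_through => /andP[l0L Pl0]; case: (GQ) => _ _ _ proj.
pose U := \bigcup_(w in l0 :\ P)
  \bigcup_(m in lines_through L w :\ l0) (m :\ w).
apply: (@leq_trans #|U|).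
  apply/subset_leq_card/subsetP => x; rewrite inE => Px.
  have xl0 : x \notin l0 by apply: contra Px; apply: collinear_mem.
  have [w [[wl0 xw] _]] := proj x l0 l0L xl0.
  have [m [mL xm wm]] := collinearP _ _ xw.
  apply/bigcupP; exists w.
    by rewrite !inE wl0 andbT; apply: contra Px => /eqP <-; rewrite collinear_sym.
  apply/bigcupP; exists m.
    by rewrite !inE mL wm !andbT; apply: contraNneq xl0 => <-.
  by rewrite !inE xm andbT; apply: contraNneq xl0 => ->.
apply: leq_trans (card_bigcup_leq _ _) _.
rewrite expnS -{1}(card_line_setD1 l0L Pl0) -sum_nat_const leq_sum // => w.
rewrite inE => /andP[_ wl0].
apply: leq_trans (card_bigcup_leq _ _) _.
rewrite -mulnn -{1}(card_lines_through_setD1 l0L wl0) -sum_nat_const leq_sum // => m.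
by rewrite !inE => /andP[_ /andP[mL wm]]; rewrite card_line_setD1.
Qed.

End Quadrangle.

Section ElationGroup.

Variables (Pt : finType) (L : {set {set Pt}}) (s : nat) (P : Pt).
Variable G : {group {perm Pt}}.
Hypothesis GQ : is_GQ L s.
Hypothesis G_elations : forall g, g \in G -> is_coll L g /\ is_elation L P g.
Hypothesis G_regular : forall x y, ~~ collinear L P x -> ~~ collinear L P y ->
  exists! g, g \in G /\ g x = y.

Lemma elation_mem_line k l w : k \in G -> l \in L -> P \in l -> w \in l -> k w \in l.
Proof.
move=> kG lL Pl wl; have [_ [->|[fix_l _]]] := G_elations kG; first by rewrite perm1.
by rewrite -(fix_l l lL Pl) imset_f.
Qed.

Lemma collinear_act k x z : k \in G -> collinear L x z -> collinear L (k x) (k z).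
Proof.
move=> kG /collinearP[l [lL xl zl]]; have [coll_k _] := G_elations kG.
by apply: (collinear_mem (coll_k l lL)); apply: imset_f.
Qed.

Lemma collinear_base_act k x : k \in G -> collinear L P (k x) = collinear L P x.
Proof.
have base_act k' x' : k' \in G -> collinear L P x' -> collinear L P (k' x').
  move=> k'G /collinearP[l [lL Pl x'l]].
  exact: collinear_mem lL Pl (elation_mem_line k'G lL Pl x'l).
move=> kG; apply/idP/idP; last exact: base_act.
by move/(base_act _ _ (groupVr kG)); rewrite -permM mulgV perm1.
Qed.

Variable y : Pt.
Hypothesis y_far : ~~ collinear L P y.

Lemma orbit_inj : {in G &, injective (fun k : {perm Pt} => k y)}.
Proof.
move=> k1 k2 k1G k2G /= k12y.
have k1y_far : ~~ collinear L P (k1 y) by rewrite collinear_base_act.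
have [g [_ uniq_g]] := G_regular y_far k1y_far.
by rewrite -(uniq_g k1) ?(uniq_g k2).
Qed.

Lemma orbit_onto x : ~~ collinear L P x -> exists2 k, k \in G & k y = x.
Proof. by move=> x_far; have [g [[gG gy] _]] := G_regular y_far x_far; exists g. Qed.

Lemma card_elation_group_leq : #|G| <= s ^ 3.
Proof.
rewrite -(card_in_imset orbit_inj); apply: leq_trans (card_noncollinear_leq GQ P).
by apply/subset_leq_card/subsetP => _ /imsetP[k kG ->]; rewrite inE collinear_base_act.
Qed.

Local Notation Ly := (lines_through L y).
Local Notation z := (zpt L P).
Local Notation A := (Astab G).
Local Notation As := (Astarstab L P G).

Lemma base_notin_line M : M \in Ly -> P \notin M.
Proof.
by rewrite in_lines_through => /andP[ML yM]; apply: contra y_far => /collinear_mem; apply.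
Qed.

Lemma zpt_spec M : M \in Ly -> z M \in M /\ collinear L P (z M).
Proof.
move=> MLy; rewrite /zpt; case: pickP => [w /andP[] //|no_w].
case: GQ => _ _ _ proj; move: (MLy); rewrite in_lines_through => /andP[ML _].
have [w [[wM Pw] _]] := proj P M ML (base_notin_line MLy).
by move: (no_w w); rewrite wM Pw.
Qed.

Lemma zpt_unique M w : M \in Ly -> w \in M -> collinear L P w -> w = z M.
Proof.
move=> MLy wM Pw; have [zM Pz] := zpt_spec MLy.
move: (MLy); rewrite in_lines_through => /andP[ML _].
exact: (proj_unique GQ ML (base_notin_line MLy) wM zM Pw Pz).
Qed.

Lemma zpt_neq_y M : M \in Ly -> z M != y.
Proof. by move=> /zpt_spec[_ Pz]; apply: contraNneq y_far => <-. Qed.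

Lemma collinear_y_zpt M : M \in Ly -> collinear L y (z M).
Proof.
move=> MLy; have [zM _] := zpt_spec MLy.
by move: MLy; rewrite in_lines_through => /andP[ML yM]; apply: collinear_mem zM.
Qed.

(* Otherwise y, z M and z N would span a triangle. *)
Lemma noncollinear_zpt M N : M \in Ly -> N \in Ly -> M != N ->
  ~~ collinear L (z M) (z N).
Proof.
move=> MLy NLy neqMN; apply/collinearP => -[l [lL zMl zNl]].
have [zM _] := zpt_spec MLy; have [zN _] := zpt_spec NLy.
move: (MLy) (NLy); rewrite !in_lines_through => /andP[ML yM] /andP[NL yN].
have yzM : y != z M by rewrite eq_sym zpt_neq_y.
have yzN : y != z N by rewrite eq_sym zpt_neq_y.
case yl: (y \in l).
  have eMl := line_unique GQ ML lL yzM yM zM yl zMl.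
  have eNl := line_unique GQ NL lL yzN yN zN yl zNl.
  by rewrite eMl eNl eqxx in neqMN.
have ezMN := proj_unique GQ lL (negbT yl) zMl zNl (collinear_y_zpt MLy)
  (collinear_y_zpt NLy).
rewrite -ezMN in zN yzN.
by rewrite (line_unique GQ ML NL yzM yM zM yN zN) eqxx in neqMN.
Qed.

Lemma zpt_notin M N : M \in Ly -> N \in Ly -> M != N -> z N \notin M.
Proof.
move=> MLy NLy neqMN; apply: contra (noncollinear_zpt MLy NLy neqMN) => zNM.
have [zM _] := zpt_spec MLy.
by move: MLy; rewrite in_lines_through => /andP[ML _]; apply: collinear_mem zNM.
Qed.

Lemma Astab_group_set M : group_set (A M).
Proof.
apply/group_setP; split; first by rewrite inE group1 (eq_imset _ (@perm1 _)) imset_id eqxx.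
move=> a b; rewrite !inE => /andP[aG /eqP aM] /andP[bG /eqP bM].
by rewrite groupM // (eq_imset _ (permM a b)) imset_comp aM bM eqxx.
Qed.
Canonical Astab_group M := Group (Astab_group_set M).

Lemma Astarstab_group_set M : group_set (As M).
Proof.
apply/group_setP; split; first by rewrite inE group1 perm1 eqxx.
move=> a b; rewrite !inE => /andP[aG /eqP az] /andP[bG /eqP bz].
by rewrite groupM // permM az bz eqxx.
Qed.
Canonical Astarstab_group M := Group (Astarstab_group_set M).

Lemma Astarstab_sub M : As M \subset G.
Proof. by apply/subsetP => k /setIdP[]. Qed.

Lemma Astab_sub_Astarstab M : M \in Ly -> A M \subset As M.
Proof.
move=> MLy; apply/subsetP => k /setIdP[kG /eqP kM]; rewrite inE kG /=.
have [zM Pz] := zpt_spec MLy.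
apply/eqP/zpt_unique; rewrite ?collinear_base_act //.
by rewrite -{2}kM imset_f.
Qed.

Lemma Astab_Astarstab_trivial M N k : M \in Ly -> N \in Ly -> M != N ->
  k \in A M -> k \in As N -> k = 1%g.
Proof.
move=> MLy NLy neqMN /setIdP[kG /eqP kM] /setIdP[_ /eqP kz].
apply: orbit_inj; rewrite ?group1 // perm1 /=.
move: (MLy); rewrite in_lines_through => /andP[ML yM].
have [zN _] := zpt_spec NLy.
apply: (proj_unique GQ ML (zpt_notin MLy NLy neqMN)) => //.
- by rewrite -kM imset_f.
- by rewrite collinear_sym -kz collinear_act ?collinear_y_zpt.
- by rewrite collinear_sym collinear_y_zpt.
Qed.

(* Each point x of M other than z M is the image of y under some elation k;
   k fixes the line [P, z M] and hence z M, so k fixes M = [x, z M]. *)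
Lemma leq_card_Astab M : M \in Ly -> s <= #|A M|.
Proof.
move=> MLy; have [zM Pz] := zpt_spec MLy.
move: (MLy); rewrite in_lines_through => /andP[ML yM].
rewrite -(card_line_setD1 GQ ML zM).
apply: leq_trans (leq_imset_card (fun k : {perm Pt} => k y) (A M)).
apply/subset_leq_card/subsetP => x /setD1P[xz xM].
have x_far : ~~ collinear L P x by apply: contra xz => Px; rewrite (zpt_unique MLy xM Px).
have [k kG kyx] := orbit_onto x_far.
have /collinearP[l [lL Pl zl]] := Pz.
have kz : k (z M) = z M.
  have xl : x \notin l by apply: contra x_far; apply: collinear_mem.
  apply: (proj_unique GQ lL xl) => //; first exact: elation_mem_line.
    by rewrite -kyx collinear_act ?collinear_y_zpt.
  exact: collinear_mem xM zM.
apply/imsetP; exists k => //; rewrite inE kG /=.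
have [coll_k _] := G_elations kG.
apply/eqP/(line_unique GQ (coll_k M ML) ML xz) => //; first by rewrite -kyx imset_f.
by rewrite -{1}kz imset_f.
Qed.

(* The line joining k y to z M = k (z M) determines k: k y is the projection
   of z N = k (z N) onto it. *)
Lemma leq_card_AstarstabI M N : M \in Ly -> N \in Ly -> M != N ->
  #|As M :&: As N| <= s.
Proof.
move=> MLy NLy neqMN; have [zM Pz] := zpt_spec MLy.
have /collinearP[l0 [l0L Pl0 zl0]] := Pz.
pose f (k : {perm Pt}) := odflt l0 [pick l in L | (z M \in l) && (k y \in l)].
have f_spec k : k \in As M :&: As N -> [/\ f k \in L, z M \in f k & k y \in f k].
  case/setIP => /setIdP[kG /eqP kz] _; rewrite /f; case: pickP => [l /and3P[] //|no_l].
  have := collinear_act kG (collinear_y_zpt MLy); rewrite kz.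
  by case/collinearP => l [lL kyl zl]; move: (no_l l); rewrite lL zl kyl.
rewrite -(card_lines_through_setD1 GQ l0L zl0) -(card_in_imset (f := f)).
  apply/subset_leq_card/subsetP => _ /imsetP[k kMN ->].
  have [fL zf kyf] := f_spec k kMN.
  have /setIP[/setIdP[kG _] _] := kMN.
  rewrite !inE fL zf !andbT; apply: contraTneq kyf => ->.
  by apply: contra y_far => kyl0; rewrite -(collinear_base_act _ kG) (collinear_mem l0L).
move=> k1 k2 k1MN k2MN f12.
have [fL zf k1f] := f_spec k1 k1MN; have [_ _ k2f] := f_spec k2 k2MN.
have /setIP[/setIdP[k1G _] /setIdP[_ /eqP k1z]] := k1MN.
have /setIP[/setIdP[k2G _] /setIdP[_ /eqP k2z]] := k2MN.
have zNf : z N \notin f k1.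
  by apply: contra (noncollinear_zpt MLy NLy neqMN); apply: collinear_mem.
apply: orbit_inj => //; apply: (proj_unique GQ fL zNf k1f); first by rewrite f12.
  by rewrite collinear_sym -k1z collinear_act ?collinear_y_zpt.
by rewrite collinear_sym -k2z collinear_act ?collinear_y_zpt.
Qed.

Lemma s_gt0 : 0 < s.
Proof.
have /card_gt0P[M MLy] : 0 < #|Ly| by rewrite (card_lines_through GQ).
have [zM _] := zpt_spec MLy.
move: (MLy); rewrite in_lines_through => /andP[ML yM].
rewrite -(card_line_setD1 GQ ML yM); apply/card_gt0P; exists (z M).
by rewrite !inE zM zpt_neq_y.
Qed.

Lemma exists_other_line M : M \in Ly -> exists2 N, N \in Ly & N != M.
Proof.
move=> MLy; move: (MLy); rewrite in_lines_through => /andP[ML yM].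
have /card_gt0P[N /setD1P[NM NLy]] : 0 < #|Ly :\ M|.
  by rewrite (card_lines_through_setD1 GQ ML yM) s_gt0.
by exists N.
Qed.

Lemma exists_two_lines : exists M N, [/\ M \in Ly, N \in Ly & M != N].
Proof.
have /card_gt0P[M MLy] : 0 < #|Ly| by rewrite (card_lines_through GQ).
by have [N NLy NM] := exists_other_line MLy; exists M, N; rewrite eq_sym.
Qed.

Variable H : {group {perm Pt}}.
Hypothesis H_sub_G : H \subset G.
Hypothesis card_H : #|H| = s.
Hypothesis H_symmetries : forall h, h \in H -> is_symmetry L P h.

Lemma H_sub_Astarstab M : M \in Ly -> H \subset As M.
Proof.
move=> MLy; apply/subsetP => h hH; rewrite inE (subsetP H_sub_G h hH) /=.
by have [_ fix_h] := H_symmetries hH; rewrite fix_h ?(zpt_spec MLy).2.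
Qed.

Lemma Astab_H_trivial M : M \in Ly -> A M :&: H = 1%g.
Proof.
move=> MLy; have [N NLy NM] := exists_other_line MLy.
apply/eqP; rewrite eqEsubset sub1G andbT; apply/subsetP => k /setIP[kA kH].
have kN : k \in As N := subsetP (H_sub_Astarstab NLy) k kH.
by rewrite inE (Astab_Astarstab_trivial MLy NLy _ kA kN) // eq_sym.
Qed.

Lemma leq_card_Astarstab M : M \in Ly -> s * s <= #|As M|.
Proof.
move=> MLy; have := mul_cardG (Astab_group M) H.
rewrite /= Astab_H_trivial // cards1 muln1 => card_AH.
apply: (@leq_trans (#|A M| * #|H|)); first by rewrite card_H leq_mul2r leq_card_Astab ?orbT.
rewrite card_AH subset_leq_card // mul_subG ?Astab_sub_Astarstab ?H_sub_Astarstab //.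
Qed.

Lemma AstarstabI M N : M \in Ly -> N \in Ly -> M != N -> As M :&: As N = H.
Proof.
move=> MLy NLy neqMN; apply/eqP; rewrite eq_sym eqEcard subsetI !H_sub_Astarstab //=.
by rewrite card_H leq_card_AstarstabI.
Qed.

(* h ^ g still fixes every point collinear with P. *)
Lemma H_normal : (H <| G)%g.
Proof.
rewrite /normal H_sub_G; apply/subsetP => g gG; rewrite inE.
apply/subsetP => _ /imsetP[h hH ->].
have [M [N [MLy NLy neqMN]]] := exists_two_lines.
have fix_hg K : K \in Ly -> (h ^ g)%g (z K) = z K.
  move=> KLy; have [_ PzK] := zpt_spec KLy; have [_ fix_h] := H_symmetries hH.
  by rewrite /conjg !permM fix_h ?permKV // collinear_base_act ?groupV.
have hG := subsetP H_sub_G h hH.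
by rewrite -(AstarstabI MLy NLy neqMN) !inE groupJ // !fix_hg ?eqxx.
Qed.

Lemma leq_card_Astarstab_mul M N : M \in Ly -> N \in Ly -> M != N ->
  s ^ 3 <= #|As M * As N|%g.
Proof.
move=> MLy NLy neqMN; have := mul_cardG (Astarstab_group M) (Astarstab_group N).
rewrite /= AstarstabI // card_H => card_mul; rewrite -(leq_pmul2r s_gt0) -card_mul.
have -> : s ^ 3 * s = (s * s) * (s * s) by rewrite !expnS expn0 !mulnA muln1.
by rewrite leq_mul ?leq_card_Astarstab.
Qed.

Lemma Astarstab_mul M N : M \in Ly -> N \in Ly -> M != N -> (As M * As N)%g = G.
Proof.
move=> MLy NLy neqMN; apply/eqP; rewrite eqEcard mul_subG ?Astarstab_sub //=.
exact: leq_trans card_elation_group_leq (leq_card_Astarstab_mul MLy NLy neqMN).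
Qed.

Lemma card_elation_group : #|G| = s ^ 3.
Proof.
have [M [N [MLy NLy neqMN]]] := exists_two_lines.
apply/eqP; rewrite eqn_leq card_elation_group_leq -(Astarstab_mul MLy NLy neqMN).
exact: leq_card_Astarstab_mul.
Qed.

(* The s + 1 pairwise disjoint sets As M :\: H, each of size at least s^2 - s,
   already fill the s^3 - s elements of G :\: H. *)
Lemma Astarstab_cover x : x \in G -> exists2 M, M \in Ly & x \in As M.
Proof.
move=> xG; apply/exists_inP; apply: contraT; rewrite negb_exists_in => /forall_inP x_out.
have [M0 [_ [M0Ly _ _]]] := exists_two_lines.
have xH : x \notin H.
  by apply: contra (x_out M0 M0Ly); apply: subsetP (H_sub_Astarstab M0Ly) x.
have sum_leq : \sum_(M in Ly) #|As M :\: H| <= #|(G :\: H) :\ x|.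
  apply: leq_sum_card_disjoint => [M MLy|M N MLy NLy neqMN].
    apply/subsetP => k /setDP[kM kH].
    rewrite in_setD1 in_setD kH (subsetP (Astarstab_sub M)) //= andbT.
    by apply: contraTneq kM => ->; apply: x_out.
  rewrite -setI_eq0 -subset0; apply/subsetP => k; rewrite in_setI !in_setD.
  case/andP=> /andP[kH kM] /andP[_ kN].
  by rewrite -(AstarstabI MLy NLy neqMN) in_setI kM kN in kH.
have card_GH : #|(G :\: H) :\ x| + 1 + s = s ^ 3.
  rewrite -card_elation_group -(cardsID H G) (setIidPr H_sub_G) card_H (cardsD1 x (G :\: H)).
  by rewrite in_setD xH xG; lia.
have card_AsH M : M \in Ly -> s * s - s <= #|As M :\: H|.
  move=> MLy; rewrite cardsD (setIidPr (H_sub_Astarstab MLy)) card_H.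
  by rewrite leq_sub2r ?leq_card_Astarstab.
have : \sum_(M in Ly) (s * s - s) <= #|(G :\: H) :\ x|.
  by apply: leq_trans sum_leq; apply: leq_sum.
rewrite sum_nat_const (card_lines_through GQ).
move: card_GH s_gt0; nia.
Qed.

(* If h ^ g lies in As K with K != M, write g = b * c with b in As M and c in
   As K: then h ^ b lies in As M :&: As K = H, a normal subgroup. *)
Lemma Astarstab_normal M : M \in Ly -> (As M <| G)%g.
Proof.
move=> MLy; rewrite /normal Astarstab_sub; apply/subsetP => g gG; rewrite inE.
apply/subsetP => _ /imsetP[h hM ->].
have hG := subsetP (Astarstab_sub M) h hM.
have [K KLy hgK] := Astarstab_cover (groupJ hG gG).
have [-> //|neqMK] := eqVneq M K.
move: gG hgK; rewrite -(Astarstab_mul MLy KLy neqMK) => /mulsgP[b c bM cK ->].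
rewrite conjgM => hbcK.
have hbK : (h ^ b)%g \in As K by have := groupJ hbcK (groupVr cK); rewrite conjgK.
have hbH : (h ^ b)%g \in H by rewrite -(AstarstabI MLy KLy neqMK) in_setI hbK groupJ.
rewrite (subsetP (H_sub_Astarstab MLy)) // memJ_norm ?(subsetP (normal_norm H_normal)) //.
exact: subsetP (Astarstab_sub K) c cK.
Qed.

Lemma commg_Astarstab M N : M \in Ly -> N \in Ly -> M != N ->
  ([~: As M, As N] \subset H)%g.
Proof.
move=> MLy NLy neqMN; rewrite -(AstarstabI MLy NLy neqMN).
apply: commg_subI; rewrite subsetI ?subxx (subset_trans (Astarstab_sub _)) //.
  exact: normal_norm (Astarstab_normal NLy).
exact: normal_norm (Astarstab_normal MLy).
Qed.

Lemma U0_sub_H : U0 L P y G \subset H.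
Proof.
have [M [N [MLy NLy neqMN]]] := exists_two_lines.
apply/subsetP => g /bigcapP g_in.
by rewrite -(AstarstabI MLy NLy neqMN) inE !g_in.
Qed.

Hypothesis s_even : ~~ odd s.

(* Every x1 lies in some As I, and G = As J * As K for two further lines J, K;
   this is where s >= 2 is needed. *)
Lemma der1_sub_H : (G^`(1) \subset H)%g.
Proof.
rewrite derg1 gen_subG; apply/subsetP => _ /imset2P[x1 x2 x1G x2G ->].
have [I ILy x1I] := Astarstab_cover x1G.
move: (ILy); rewrite in_lines_through => /andP[IL yI].
have /card_gt1P[J [K [/setD1P[JI JLy] /setD1P[KI KLy] neqJK]]] : 1 < #|Ly :\ I|.
  rewrite (card_lines_through_setD1 GQ IL yI).
  by move: s_even s_gt0; case: (s) => [|[]].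
move: x2G; rewrite -(Astarstab_mul JLy KLy neqJK) => /mulsgP[a c aJ cK ->].
rewrite commgMJ groupM //.
  by apply: subsetP (commg_Astarstab ILy KLy _) _ (mem_commg x1I cK); rewrite eq_sym.
rewrite memJ_norm ?(subsetP (normal_norm H_normal)) ?(subsetP (Astarstab_sub K)) //.
by apply: subsetP (commg_Astarstab ILy JLy _) _ (mem_commg x1I aJ); rewrite eq_sym.
Qed.

Local Open Scope ring_scope.

Lemma chi_gen_H b g : g \in H ->
  chi_gen b L s P y G g = (s.+1)%:R / (2 * s%:R) *
    ((g == 1%g)%:R * #|'C_G[g]%g|%:R - (g \in G^`(1)%g)%:R * #|(G / G^`(1))%g|%:R).
Proof.
move=> gH; have gG := subsetP H_sub_G g gH.
have class_sub : (g ^: G)%g \subset H by rewrite class_sub_norm ?normal_norm ?H_normal.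
have coset_sub : (g *: G^`(1))%g \subset H.
  apply/subsetP => k; rewrite mem_lcoset => /(subsetP der1_sub_H) kH.
  by rewrite -(mulKVg g k) groupM.
have card_class : (#|'C_G[g]%g| * #|(g ^: G)%g|)%N = #|G|.
  by rewrite -index_cent1 Lagrange ?subsetIl.
have card_coset : (#|(G / G^`(1))%g| * #|G^`(1)%g|)%N = #|G|.
  by rewrite card_quotient ?der_norm // mulnC Lagrange ?der_sub.
rewrite /chi_gen; set e : rat := if b then 1 else -1.
under eq_bigr => M MLy.
  rewrite (card_setI_trivial (Astab_H_trivial MLy) class_sub) mem1_class.
  rewrite (card_setI_trivial (Astab_H_trivial MLy) coset_sub) mem_lcoset mulg1 groupV.
  rewrite (setIidPr (subset_trans class_sub (H_sub_Astarstab MLy))).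
  rewrite (setIidPr (subset_trans coset_sub (H_sub_Astarstab MLy))) card_lcoset.
  over.
rewrite sumr_const (card_lines_through GQ) -mulr_natr.
set a := #|'C_G[g]%g|; set c := #|(g ^: G)%g|; set q := #|(G / G^`(1))%g|.
set d := #|G^`(1)%g|.
have class_eq : a%:R * c%:R = q%:R * d%:R :> rat.
  by rewrite -!natrM card_class card_coset.
have -> : forall u v : rat, a%:R * (s%:R * u + e * c%:R) - q%:R * (s%:R * v + e * d%:R)
    = s%:R * (u * a%:R - v * q%:R) + e * (a%:R * c%:R - q%:R * d%:R).
  by move=> u v; ring.
rewrite class_eq subrr mulr0 addr0.
have s_neq0 : s%:R != 0 :> rat by rewrite pnatr_eq0 -lt0n s_gt0.
by field.
Qed.

End ElationGroup.

Unset Implicit Arguments.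

Local Open Scope ring_scope.

Theorem corollary2p8 (Pt : finType) (L : {set {set Pt}}) (s : nat) (P y : Pt)
    (G : {group {perm Pt}}) :
  ~~ odd s ->
  is_STGQ L s P G ->
  ~~ collinear L P y ->
  forall g : {perm Pt}, g \in U0 L P y G ->
    chi_S L s P y G g = chi_T L s P y G g /\
    (g \notin G^`(1)%g -> chi_S L s P y G g = 0) /\
    (g \in G^`(1)%g -> g != 1%g ->
       chi_S L s P y G g = - ((s.+1)%:R / (2 * s%:R)) * #|(G / G^`(1))%g|%:R) /\
    (g = 1%g ->
       chi_S L s P y G g = ((s.+1)%:R / (2 * s%:R)) * ((s ^ 3)%N%:R - #|(G / G^`(1))%g|%:R)).
Proof.
move=> s_even [[GQ G_el G_reg] [H [sHG card_H H_sym]]] y_far g gU0.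
have gH := subsetP (U0_sub_H GQ G_el G_reg y_far sHG card_H H_sym) g gU0.
have chi_gH b := chi_gen_H GQ G_el G_reg y_far sHG card_H H_sym s_even b gH.
rewrite /chi_S /chi_T !chi_gH; split=> //; split=> [gG'|].
  have g_neq1 : (g == 1%g) = false by apply: contraNF gG' => /eqP ->.
  by rewrite g_neq1 (negbTE gG') !mul0r subrr mulr0.
split=> [gG' g_neq1|g1].
  by rewrite gG' (negbTE g_neq1) mul0r mul1r sub0r mulrN mulNr.
have card_C1 : #|'C_G[1]%g| = (s ^ 3)%N.
  by rewrite cent11T setIT (card_elation_group GQ G_el G_reg y_far sHG card_H H_sym).
by rewrite g1 eqxx group1 card_C1 !mul1r.
Qed.
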